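(* Let $A=e\int_0^1 \frac{e^{-1/x}}{x}\,dx$. Let $b_1=b_2=1$, $b_3=b_4=2$, $b_5=b_6=3$, and in general $b_{2j-1}=b_{2j}=j$ for $j\ge1$. Put $R_0=1$ and, for $N\ge1$, $$R_N=\cfrac{1}{1+\cfrac{b_1}{1+\cfrac{b_2}{\ddots\,1+\cfrac{b_{N-1}}{1+b_N}}}}.$$ Then $R_N\to A$ as $N\to\infty$, i.e. $$A=\cfrac{1}{1+\cfrac{1}{1+\cfrac{1}{1+\cfrac{2}{1+\cfrac{2}{1+\cfrac{3}{1+\cfrac{3}{1+\cdots}}}}}}},$$ and the approximants alternate about $A$: $R_N>A$ for every even $N\ge0$ and $R_N<A$ for every odd $N\ge1$ (so $R_1=\tfrac12$, $R_3=\tfrac47$, $R_5=\tfrac{20}{34},\dots$ lie below $A$ and $R_0=1$, $R_2=\tfrac23$, $R_4=\tfrac8{13},\dots$ lie above $A$).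
   Context: $e$ is the base of the natural logarithm. *)

From Stdlib Require Import Reals Lra Lia.
Open Scope R_scope.

(* Integrand e^{-1/x}/x on (0,1], extended by its limit 0 at x <= 0
   (the value at the single point 0 does not affect the Riemann integral). *)
Definition integrand (x : R) : R :=
  if Rle_dec x 0 then 0 else exp (- / x) / x.

(* b_k = ceil(k/2) for k >= 1, i.e. b_{2j-1} = b_{2j} = j. *)
Definition b (k : nat) : R := INR ((k + 1) / 2)%nat.

Fixpoint cf_tail (n k : nat) : R :=
  match n with
  | O => 1
  | S n' => 1 + b k / cf_tail n' (S k)
  end.

Definition Rapprox (N : nat) : R := 1 / cf_tail N 1.

(* Write I(p, q) for the integral over [0, 1] of e^(-1/x) (1-x)^q / x^p. The numbers
   f_0 = 1, f_(2m+1) = e m! I(1, m), f_(2m+2) = e m! I(2, m+1) are positive and satisfy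
   f_2 + f_1 = f_0 and f_(n+2) + f_(n+1) = b_n f_n for n >= 1: the even steps split the
   integrand using 1 = x + (1 - x), the odd ones integrate d/dx [e^(-1/x) (1-x)^q] by
   parts. Hence the ratios t_k = (f_k + f_(k+1)) / f_k are the exact tails,
   t_k = 1 + b_k / t_(k+1), and A = f_1 = 1 / t_1. As t |-> 1 + b / t is decreasing,
   truncating the continued fraction at depth N errs with sign (-1)^N, which is the
   alternation; so A lies between consecutive approximants, whose distance is at most
   4 / (N + 2) because two levels of the tail recursion contract the difference of
   consecutive truncations by b_k b_(k+1) / (1 + b_(k+1))^2 <= ((k+1) / (k+3))^2. *)

From Coquelicot Require Import Coquelicot.
From Stdlib Require Import Reals Lra Lia Factorial.
Open Scope R_scope.

Lemma b_nonneg k : 0 <= b k.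
Proof. apply pos_INR. Qed.

Lemma b_double i : b (2 * i) = INR i.
Proof.
  unfold b; f_equal.
  replace (2 * i + 1)%nat with (1 + i * 2)%nat by lia.
  now rewrite Nat.div_add by lia.
Qed.

Lemma b_double_succ i : b (2 * i + 1) = INR i + 1.
Proof.
  unfold b; replace (2 * i + 1 + 1)%nat with ((i + 1) * 2)%nat by lia.
  now rewrite Nat.div_mul, plus_INR by lia.
Qed.

Lemma b_pos k : (1 <= k)%nat -> 0 < b k.
Proof.
  intro Hk; destruct (Nat.Even_or_Odd k) as [[i ->]|[i ->]].
  - rewrite b_double; apply lt_0_INR; lia.
  - rewrite b_double_succ; pose proof (pos_INR i); lra.
Qed.

Lemma b_le_half k : b k <= (INR k + 1) / 2.
Proof.
  destruct (Nat.Even_or_Odd k) as [[i ->]|[i ->]].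
  - rewrite b_double, mult_INR; simpl; pose proof (pos_INR i); lra.
  - rewrite b_double_succ, plus_INR, mult_INR; simpl; lra.
Qed.

(* Two levels of the recursion [cf_step_S] shrink the bound by this factor;
   equality holds for odd [k]. *)
Lemma b_two_step_ratio k :
  b k * b (S k) * (INR k + 3) ^ 2 <= (INR k + 1) ^ 2 * (1 + b (S k)) ^ 2.
Proof.
  destruct (Nat.Even_or_Odd k) as [[i ->]|[i ->]].
  - replace (S (2 * i)) with (2 * i + 1)%nat by lia.
    rewrite b_double, b_double_succ, mult_INR; simpl.
    pose proof (pos_INR i).
    assert (0 <= INR i * INR i * INR i) by (apply Rmult_le_pos; nra).
    nra.
  - replace (S (2 * i + 1)) with (2 * (i + 1))%nat by lia.
    rewrite b_double, b_double_succ, plus_INR, plus_INR, mult_INR; simpl.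
    right; ring.
Qed.

Lemma cf_tail_ge1 n k : 1 <= cf_tail n k.
Proof.
  revert k; induction n as [|n IH]; intro k; simpl; [lra|].
  pose proof (IH (S k)); pose proof (b_nonneg k).
  assert (0 <= b k / cf_tail n (S k)) by (apply Rdiv_le_0_compat; lra).
  lra.
Qed.

Lemma cf_tail_S_mul n k :
  cf_tail (S n) k * cf_tail n (S k) = cf_tail n (S k) + b k.
Proof.
  change (cf_tail (S n) k) with (1 + b k / cf_tail n (S k)).
  pose proof (cf_tail_ge1 n (S k)); field; lra.
Qed.

Definition cf_step n k := cf_tail (S n) k - cf_tail n k.

Lemma cf_step_S n k :
  cf_step (S n) k = - b k * cf_step n (S k) / (cf_tail (S n) (S k) * cf_tail n (S k)).
Proof.
  unfold cf_step.
  change (cf_tail (S (S n)) k) with (1 + b k / cf_tail (S n) (S k)).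
  change (cf_tail (S n) k) with (1 + b k / cf_tail n (S k)).
  pose proof (cf_tail_ge1 (S n) (S k)); pose proof (cf_tail_ge1 n (S k)).
  field; lra.
Qed.

Lemma cf_step_0 k : cf_step 0 k = b k.
Proof. unfold cf_step; simpl; field. Qed.

Lemma cf_step_1 k : cf_step 1 k = - (b k * b (S k) / (1 + b (S k))).
Proof.
  rewrite cf_step_S, cf_step_0; simpl.
  pose proof (b_nonneg (S k)); field; lra.
Qed.

Lemma Rabs_cf_step_SS n k :
  Rabs (cf_step (S (S n)) k)
  <= b k * b (S k) / (1 + b (S k)) ^ 2 * Rabs (cf_step n (S (S k))).
Proof.
  rewrite cf_step_S, cf_step_S.
  pose proof (cf_tail_S_mul (S n) (S k)) as HX.
  pose proof (cf_tail_S_mul n (S k)) as HY.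
  pose proof (cf_tail_ge1 (S n) (S (S k))); pose proof (cf_tail_ge1 n (S (S k))).
  pose proof (cf_tail_ge1 (S (S n)) (S k)); pose proof (cf_tail_ge1 (S n) (S k)).
  pose proof (b_nonneg k); pose proof (b_nonneg (S k)).
  set (X := cf_tail (S (S n)) (S k) * cf_tail (S n) (S (S k))) in *.
  set (Y := cf_tail (S n) (S k) * cf_tail n (S (S k))) in *.
  assert (HXY : (1 + b (S k)) ^ 2 <= X * Y) by (simpl; apply Rmult_le_compat; nra).
  replace (- b k * (- b (S k) * cf_step n (S (S k))
            / (cf_tail (S n) (S (S k)) * cf_tail n (S (S k))))
            / (cf_tail (S (S n)) (S k) * cf_tail (S n) (S k)))
    with (b k * b (S k) / (X * Y) * cf_step n (S (S k)))
    by (unfold X, Y; field; nra).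
  rewrite Rabs_mult, (Rabs_right (_ / _))
    by (apply Rle_ge, Rdiv_le_0_compat; nra).
  apply Rmult_le_compat_r; [apply Rabs_pos|].
  apply Rmult_le_compat_l; [nra|].
  apply Rinv_le_contravar; [nra|exact HXY].
Qed.

Lemma Rabs_cf_step_le n k : Rabs (cf_step n k) <= (INR k + 1) ^ 2 / (INR n + INR k + 1).
Proof.
  revert k; induction n as [n IH] using Wf_nat.lt_wf_ind; intro k.
  pose proof (pos_INR k) as Hk; pose proof (b_le_half k); pose proof (b_nonneg k).
  destruct n as [|[|n]].
  - rewrite cf_step_0, Rabs_right by lra.
    replace ((INR k + 1) ^ 2 / (INR 0 + INR k + 1)) with (INR k + 1)
      by (simpl; field; lra).
    lra.
  - pose proof (b_nonneg (S k)).
    assert (b k * b (S k) / (1 + b (S k)) <= b k).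
    { apply Rmult_le_reg_r with (1 + b (S k)); [lra|].
      unfold Rdiv; rewrite Rmult_assoc, Rinv_l by lra; nra. }
    rewrite cf_step_1, Rabs_Ropp, Rabs_right
      by (apply Rle_ge, Rdiv_le_0_compat; nra).
    apply Rle_trans with ((INR k + 1) / 2); [lra|].
    apply Rmult_le_reg_r with (INR 1 + INR k + 1); [simpl; lra|].
    replace ((INR k + 1) ^ 2 / (INR 1 + INR k + 1) * (INR 1 + INR k + 1))
      with ((INR k + 1) ^ 2) by (simpl; field; lra).
    simpl; nra.
  - pose proof (IH n ltac:(lia) (S (S k))) as Hn.
    pose proof (b_two_step_ratio k); pose proof (b_nonneg (S k)).
    rewrite !S_INR in *.
    replace (INR n + (INR k + 1 + 1) + 1) with (INR n + INR k + 3) in Hn by ring.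
    replace (INR k + 1 + 1 + 1) with (INR k + 3) in Hn by ring.
    replace (INR n + 1 + 1 + INR k + 1) with (INR n + INR k + 3) by ring.
    pose proof (pos_INR n).
    eapply Rle_trans; [apply Rabs_cf_step_SS|].
    eapply Rle_trans.
    { apply Rmult_le_compat_l; [apply Rdiv_le_0_compat; nra|exact Hn]. }
    apply Rmult_le_reg_r with ((1 + b (S k)) ^ 2 * (INR n + INR k + 3)); [nra|].
    replace (b k * b (S k) / (1 + b (S k)) ^ 2 * ((INR k + 3) ^ 2 / (INR n + INR k + 3))
             * ((1 + b (S k)) ^ 2 * (INR n + INR k + 3)))
      with (b k * b (S k) * (INR k + 3) ^ 2) by (field; nra).
    replace ((INR k + 1) ^ 2 / (INR n + INR k + 3) * ((1 + b (S k)) ^ 2 * (INR n + INR k + 3)))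
      with ((INR k + 1) ^ 2 * (1 + b (S k)) ^ 2) by (field; nra).
    lra.
Qed.

Section Tails.

Variable f : nat -> R.
Hypothesis f_pos : forall n, 0 < f n.
Hypothesis f_rec : forall n, (1 <= n)%nat -> f (S (S n)) + f (S n) = b n * f n.

Definition tail k := (f k + f (S k)) / f k.

Lemma tail_gt1 k : 1 < tail k.
Proof.
  unfold tail; pose proof (f_pos k); pose proof (f_pos (S k)).
  apply Rmult_lt_reg_r with (f k); [lra|].
  unfold Rdiv; rewrite Rmult_assoc, Rinv_l; lra.
Qed.

Lemma tail_rec k : (1 <= k)%nat -> tail k = 1 + b k / tail (S k).
Proof.
  intro Hk; pose proof (f_rec k Hk); pose proof (b_pos k Hk).
  pose proof (f_pos k); pose proof (f_pos (S k)); pose proof (f_pos (S (S k))).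
  unfold tail; replace (f (S k) + f (S (S k))) with (b k * f k) by lra.
  field; lra.
Qed.

Lemma tail_sub_cf_tail_sign n k :
  (1 <= k)%nat -> 0 < (-1) ^ n * (tail k - cf_tail n k).
Proof.
  revert k; induction n as [|n IH]; intros k Hk.
  - simpl; pose proof (tail_gt1 k); lra.
  - rewrite (tail_rec k Hk).
    change (cf_tail (S n) k) with (1 + b k / cf_tail n (S k)).
    pose proof (IH (S k) ltac:(lia)); pose proof (b_pos k Hk).
    pose proof (tail_gt1 (S k)); pose proof (cf_tail_ge1 n (S k)).
    replace ((-1) ^ S n * (1 + b k / tail (S k) - (1 + b k / cf_tail n (S k))))
      with ((-1) ^ n * (tail (S k) - cf_tail n (S k))
            * (b k / (tail (S k) * cf_tail n (S k))))
      by (simpl; field; lra).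
    apply Rmult_lt_0_compat; [lra|].
    apply Rdiv_lt_0_compat; nra.
Qed.

Lemma Rapprox_sub_inv_tail N :
  Rapprox N - 1 / tail 1 = (tail 1 - cf_tail N 1) / (cf_tail N 1 * tail 1).
Proof.
  unfold Rapprox; pose proof (tail_gt1 1); pose proof (cf_tail_ge1 N 1).
  field; lra.
Qed.

Lemma Rapprox_even_gt N : Nat.Even N -> Rapprox N > 1 / tail 1.
Proof.
  intros [m ->].
  pose proof (tail_sub_cf_tail_sign (2 * m) 1 (le_n 1)) as Hs.
  rewrite pow_1_even, Rmult_1_l in Hs.
  pose proof (tail_gt1 1); pose proof (cf_tail_ge1 (2 * m) 1).
  apply Rminus_gt; rewrite Rapprox_sub_inv_tail.
  apply Rdiv_lt_0_compat; nra.
Qed.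

Lemma Rapprox_odd_lt N : Nat.Odd N -> Rapprox N < 1 / tail 1.
Proof.
  intros [m ->].
  pose proof (tail_sub_cf_tail_sign (2 * m + 1) 1 (le_n 1)) as Hs.
  rewrite Nat.add_1_r, pow_1_odd in Hs.
  pose proof (tail_gt1 1); pose proof (cf_tail_ge1 (S (2 * m)) 1).
  apply Rminus_lt; rewrite Nat.add_1_r, Rapprox_sub_inv_tail.
  replace ((tail 1 - cf_tail (S (2 * m)) 1) / (cf_tail (S (2 * m)) 1 * tail 1))
    with (- (-1 * (tail 1 - cf_tail (S (2 * m)) 1) / (cf_tail (S (2 * m)) 1 * tail 1)))
    by (field; lra).
  apply Ropp_lt_gt_0_contravar, Rdiv_lt_0_compat; nra.
Qed.

(* Consecutive approximants lie on opposite sides of the limit. *)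
Lemma Rabs_Rapprox_sub_inv_tail N :
  Rabs (Rapprox N - 1 / tail 1) <= Rabs (Rapprox N - Rapprox (S N)).
Proof.
  destruct (Nat.Even_or_Odd N) as [HN|HN].
  - pose proof (Rapprox_even_gt N HN).
    pose proof (Rapprox_odd_lt (S N) (proj2 (Nat.Odd_succ N) HN)).
    rewrite !Rabs_right by lra; lra.
  - pose proof (Rapprox_odd_lt N HN).
    pose proof (Rapprox_even_gt (S N) (proj2 (Nat.Even_succ N) HN)).
    rewrite !Rabs_left by lra; lra.
Qed.

End Tails.

Lemma Rabs_Rapprox_sub_S N : Rabs (Rapprox N - Rapprox (S N)) <= 4 / (INR N + 2).
Proof.
  pose proof (cf_tail_ge1 N 1); pose proof (cf_tail_ge1 (S N) 1).
  replace (Rapprox N - Rapprox (S N))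
    with (cf_step N 1 / (cf_tail N 1 * cf_tail (S N) 1))
    by (unfold Rapprox, cf_step; field; lra).
  unfold Rdiv; rewrite Rabs_mult, (Rabs_right (/ _))
    by (apply Rle_ge, Rlt_le, Rinv_0_lt_compat; nra).
  assert (/ (cf_tail N 1 * cf_tail (S N) 1) <= 1)
    by (rewrite <- Rinv_1; apply Rinv_le_contravar; nra).
  pose proof (Rabs_cf_step_le N 1) as HE.
  replace ((INR 1 + 1) ^ 2 / (INR N + INR 1 + 1)) with (4 / (INR N + 2)) in HE
    by (simpl; pose proof (pos_INR N); field; lra).
  pose proof (Rabs_pos (cf_step N 1)).
  unfold Rdiv in HE; nra.
Qed.

Lemma Un_cv_of_dist_le_inv (u : nat -> R) (l C : R) :
  (forall n, Rabs (u n - l) <= C / (INR n + 2)) -> Un_cv u l.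
Proof.
  intros Hu eps Heps.
  set (C' := Rabs C + 1).
  assert (HC' : 0 < C') by (unfold C'; pose proof (Rabs_pos C); lra).
  destruct (archimed_cor1 (eps / C')) as [N [HN HN0]];
    [apply Rdiv_lt_0_compat; lra|].
  exists N; intros n Hn; unfold R_dist.
  assert (INR N <= INR n) by (apply le_INR; lia).
  assert (0 < INR N) by (apply lt_0_INR; lia).
  assert (C <= C') by (unfold C'; pose proof (Rle_abs C); lra).
  apply Rle_lt_trans with (C' / (INR n + 2)).
  { eapply Rle_trans; [apply Hu|].
    apply Rmult_le_compat_r; [apply Rlt_le, Rinv_0_lt_compat; lra|lra]. }
  apply Rlt_le_trans with (C' * (eps / C')); [|right; field; lra].
  apply Rmult_lt_compat_l; [lra|].
  apply Rlt_trans with (/ INR N); [apply Rinv_lt_contravar; nra|exact HN].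
Qed.

(* Extended by [0] to [x <= 0], continuously as long as [p <= 2]. *)
Definition kernel (p q : nat) (x : R) : R :=
  if Rle_dec x 0 then 0 else exp (- / x) * (1 - x) ^ q / x ^ p.

Definition kernel_integral (p q : nat) : R := RInt (kernel p q) 0 1.

Lemma exp_neg_inv_le x : 0 < x -> exp (- / x) <= 27 * x ^ 3.
Proof.
  intro Hx; set (y := / x / 3).
  assert (Hy : 0 < y) by (apply Rdiv_lt_0_compat; [apply Rinv_0_lt_compat|]; lra).
  assert (Hey : y < exp y) by (pose proof (exp_ineq1 y ltac:(lra)); lra).
  rewrite exp_Ropp.
  replace (exp (/ x)) with (exp y * exp y * exp y)
    by (rewrite <- !exp_plus; f_equal; unfold y; field; lra).
  apply Rle_trans with (/ (y * y * y)).
  - assert (0 < y * y) by (apply Rmult_lt_0_compat; lra).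
    apply Rinv_le_contravar; [apply Rmult_lt_0_compat; lra|].
    apply Rmult_le_compat; [lra|lra| |lra].
    apply Rmult_le_compat; lra.
  - right; unfold y; field; lra.
Qed.

Lemma pow_one_sub_bounds q x : 0 <= x <= 1 -> 0 <= (1 - x) ^ q <= 1.
Proof.
  intro Hx; split; [apply pow_le; lra|].
  rewrite <- (pow1 q) at 2; apply pow_incr; lra.
Qed.

Lemma Rabs_kernel_le p q y : (p <= 2)%nat -> Rabs y < 1 -> Rabs (kernel p q y) <= 27 * Rabs y.
Proof.
  intros Hp Hy; unfold kernel; destruct (Rle_dec y 0) as [|Hy0].
  - rewrite Rabs_R0; pose proof (Rabs_pos y); lra.
  - apply Rabs_def2 in Hy; apply Rnot_le_lt in Hy0.
    pose proof (exp_neg_inv_le y Hy0); pose proof (exp_pos (- / y)).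
    pose proof (pow_one_sub_bounds q y ltac:(lra)).
    assert (Hyp : 0 < y ^ p) by (apply pow_lt; lra).
    assert (H3 : y ^ 3 <= y * y ^ p)
      by (destruct p as [|[|[|p]]]; simpl; try lia; nra).
    rewrite Rabs_right, (Rabs_right y) by (try apply Rle_ge, Rdiv_le_0_compat; nra).
    apply Rmult_le_reg_r with (y ^ p); [lra|].
    unfold Rdiv; rewrite Rmult_assoc, Rinv_l by lra.
    apply Rle_trans with (exp (- / y)); [nra|].
    nra.
Qed.

Lemma continuous_at0_of_Rabs_le_linear (g : R -> R) (C : R) :
  g 0 = 0 -> (forall y, Rabs y < 1 -> Rabs (g y) <= C * Rabs y) -> continuous g 0.
Proof.
  intros H0 Hg; apply continuity_pt_filterlim.
  intros eps Heps; set (C' := Rabs C + 1).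
  assert (HC' : 0 < C') by (unfold C'; pose proof (Rabs_pos C); lra).
  exists (Rmin 1 (eps / C')); split;
    [apply Rmin_pos; [lra|apply Rdiv_lt_0_compat; lra]|].
  intros y [_ Hy]; simpl in *; unfold R_dist in *.
  rewrite H0, !Rminus_0_r in *.
  assert (Rabs y < 1) by (eapply Rlt_le_trans; [exact Hy|apply Rmin_l]).
  assert (Rabs y < eps / C') by (eapply Rlt_le_trans; [exact Hy|apply Rmin_r]).
  assert (C * Rabs y <= C' * Rabs y)
    by (apply Rmult_le_compat_r; [apply Rabs_pos|unfold C'; pose proof (Rle_abs C); lra]).
  apply Rle_lt_trans with (C' * Rabs y); [specialize (Hg y H); lra|].
  apply Rlt_le_trans with (C' * (eps / C')); [apply Rmult_lt_compat_l; lra|].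
  right; field; lra.
Qed.

Lemma kernel_eq_locally p q x :
  0 < x -> locally x (fun y => exp (- / y) * (1 - y) ^ q / y ^ p = kernel p q y).
Proof.
  intro Hx; eapply filter_imp; [|exact (open_gt 0 x Hx)].
  intros y Hy; unfold kernel; destruct (Rle_dec y 0); [lra|reflexivity].
Qed.

Lemma continuous_kernel p q x : (p <= 2)%nat -> 0 <= x -> continuous (kernel p q) x.
Proof.
  intros Hp Hx; destruct (Req_dec x 0) as [->|Hx0].
  - apply continuous_at0_of_Rabs_le_linear with 27; [|intros; apply Rabs_kernel_le; auto].
    unfold kernel; destruct (Rle_dec 0 0); lra.
  - apply (continuous_ext_loc _ _ _ (kernel_eq_locally p q x ltac:(lra))).
    apply (@ex_derive_continuous R_AbsRing R_NormedModule).
    auto_derive; split; [|split; [apply pow_nonzero|]]; auto.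
Qed.

Lemma is_derive_kernel0 q x :
  0 <= x -> is_derive (kernel 0 q) x (kernel 2 q x - INR q * kernel 0 (pred q) x).
Proof.
  intro Hx; destruct (Req_dec x 0) as [->|Hx0].
  - replace (kernel 2 q 0 - INR q * kernel 0 (pred q) 0) with 0
      by (unfold kernel; destruct (Rle_dec 0 0); [ring|lra]).
    apply is_derive_Reals; intros eps Heps.
    destruct (proj2 (continuity_pt_filterlim _ _)
                (continuous_kernel 1 q 0 ltac:(lia) (Rle_refl 0)) eps Heps)
      as [d [Hd Hcont]].
    exists (mkposreal d Hd); intros h Hh0 Hh.
    specialize (Hcont h); simpl in Hcont; unfold R_dist in Hcont.
    rewrite Rminus_0_r in Hcont; specialize (Hcont (conj (conj I (not_eq_sym Hh0)) Hh)).
    replace ((kernel 0 q (0 + h) - kernel 0 q 0) / h - 0) with (kernel 1 q h - kernel 1 q 0).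
    + exact Hcont.
    + unfold kernel; rewrite Rplus_0_l.
      destruct (Rle_dec 0 0); [|lra]; destruct (Rle_dec h 0); simpl; field; auto.
  - apply (is_derive_ext_loc _ _ _ _ (kernel_eq_locally 0 q x ltac:(lra))).
    unfold kernel; destruct (Rle_dec x 0); [lra|].
    auto_derive; [lra|unfold Rminus; simpl; field; lra].
Qed.

Lemma ex_RInt_kernel p q : (p <= 2)%nat -> ex_RInt (kernel p q) 0 1.
Proof.
  intro Hp; apply (@ex_RInt_continuous R_CompleteNormedModule).
  intros x Hx; rewrite Rmin_left, Rmax_right in Hx by lra.
  apply continuous_kernel; [exact Hp|lra].
Qed.

Lemma kernel_integral_pos p q : (p <= 2)%nat -> 0 < kernel_integral p q.
Proof.
  intro Hp; apply RInt_gt_0; [lra| |].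
  - intros x Hx; unfold kernel; destruct (Rle_dec x 0); [lra|].
    apply Rdiv_lt_0_compat; [apply Rmult_lt_0_compat|]; [apply exp_pos|apply pow_lt..]; lra.
  - intros x Hx; apply continuous_kernel; [exact Hp|lra].
Qed.

(* [1 = x + (1 - x)] *)
Lemma kernel_split p q x : kernel (S p) q x = kernel p q x + kernel (S p) (S q) x.
Proof.
  unfold kernel; destruct (Rle_dec x 0); [ring|].
  assert (x ^ p <> 0) by (apply pow_nonzero; lra).
  simpl; field; lra.
Qed.

Lemma kernel_integral_split p q :
  (p <= 1)%nat -> kernel_integral (S p) q = kernel_integral p q + kernel_integral (S p) (S q).
Proof.
  intro Hp; unfold kernel_integral.
  rewrite <- (RInt_plus (V := R_CompleteNormedModule));
    [|apply ex_RInt_kernel; lia..].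
  apply RInt_ext; intros x _; apply kernel_split.
Qed.

Lemma kernel_integral_by_parts q :
  kernel_integral 2 q - INR q * kernel_integral 0 (pred q) = exp (-1) * 0 ^ q.
Proof.
  set (g x := kernel 2 q x - INR q * kernel 0 (pred q) x).
  assert (Hlin : is_RInt g 0 1 (kernel_integral 2 q - INR q * kernel_integral 0 (pred q))).
  { apply (is_RInt_minus (V := R_NormedModule)); [|apply (is_RInt_scal (V := R_NormedModule))];
      apply (RInt_correct (V := R_CompleteNormedModule)), ex_RInt_kernel; lia. }
  assert (Hftc : is_RInt g 0 1 (kernel 0 q 1 - kernel 0 q 0)).
  { apply (is_RInt_derive (V := R_CompleteNormedModule));
      intros x Hx; rewrite Rmin_left, Rmax_right in Hx by lra.
    - apply is_derive_kernel0; lra.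
    - apply (continuous_minus (V := R_NormedModule)); [apply continuous_kernel; [lia|lra]|].
      apply (continuous_scal_r (K := R_AbsRing) (V := R_NormedModule)), continuous_kernel; [lia|lra]. }
  rewrite <- (is_RInt_unique _ _ _ _ Hlin), (is_RInt_unique _ _ _ _ Hftc).
  unfold kernel; destruct (Rle_dec 1 0); [lra|]; destruct (Rle_dec 0 0); [|lra].
  rewrite Rinv_1, Rminus_diag, <- Ropp_Ropp_IZR; simpl; field.
Qed.

(* [kernel_seq (2m+1) = e m! I(1, m)] and [kernel_seq (2m+2) = e m! I(2, m+1)]. *)
Definition kernel_seq (n : nat) : R :=
  match n with
  | O => 1
  | S k => exp 1 * INR (fact (Nat.div2 k)) *
           (if Nat.even k then kernel_integral 1 (Nat.div2 k)
            else kernel_integral 2 (S (Nat.div2 k)))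
  end.

Lemma kernel_seq_odd m : kernel_seq (S (2 * m)) = exp 1 * INR (fact m) * kernel_integral 1 m.
Proof.
  change (kernel_seq (S (2 * m))) with
    (exp 1 * INR (fact (Nat.div2 (2 * m))) *
     (if Nat.even (2 * m) then kernel_integral 1 (Nat.div2 (2 * m))
      else kernel_integral 2 (S (Nat.div2 (2 * m))))).
  now rewrite Nat.div2_double, Nat.even_mul.
Qed.

Lemma kernel_seq_even m :
  kernel_seq (S (S (2 * m))) = exp 1 * INR (fact m) * kernel_integral 2 (S m).
Proof.
  change (kernel_seq (S (S (2 * m)))) with
    (exp 1 * INR (fact (Nat.div2 (S (2 * m)))) *
     (if Nat.even (S (2 * m)) then kernel_integral 1 (Nat.div2 (S (2 * m)))
      else kernel_integral 2 (S (Nat.div2 (S (2 * m)))))).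
  now rewrite Nat.div2_succ_double, Nat.even_succ, Nat.odd_mul.
Qed.

Lemma kernel_seq_pos n : 0 < kernel_seq n.
Proof.
  destruct n as [|n]; [simpl; lra|].
  pose proof (exp_pos 1).
  destruct (Nat.Even_or_Odd n) as [[m ->]|[m ->]].
  - rewrite kernel_seq_odd; pose proof (INR_fact_lt_0 m).
    pose proof (kernel_integral_pos 1 m ltac:(lia)).
    repeat apply Rmult_lt_0_compat; lra.
  - rewrite Nat.add_1_r, kernel_seq_even; pose proof (INR_fact_lt_0 m).
    pose proof (kernel_integral_pos 2 (S m) ltac:(lia)).
    repeat apply Rmult_lt_0_compat; lra.
Qed.

Lemma kernel_seq_2_add_1 : kernel_seq 2 + kernel_seq 1 = 1.
Proof.
  change (kernel_seq 2 + kernel_seq 1)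
    with (kernel_seq (S (S (2 * 0))) + kernel_seq (S (2 * 0))).
  rewrite kernel_seq_even, kernel_seq_odd; simpl (INR (fact 0)).
  pose proof (kernel_integral_by_parts 0) as Hparts; simpl in Hparts.
  replace (exp 1 * 1 * kernel_integral 2 1 + exp 1 * 1 * kernel_integral 1 0)
    with (exp 1 * kernel_integral 2 0)
    by (rewrite (kernel_integral_split 1 0) by lia; ring).
  replace (kernel_integral 2 0) with (exp (-1)) by lra.
  now rewrite <- exp_plus, Rplus_opp_r, exp_0.
Qed.

Lemma kernel_seq_rec n :
  (1 <= n)%nat -> kernel_seq (S (S n)) + kernel_seq (S n) = b n * kernel_seq n.
Proof.
  intro Hn; destruct (Nat.Even_or_Odd n) as [[[|m] ->]|[m ->]]; [lia| |].
  - rewrite b_double, kernel_seq_even, kernel_seq_odd.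
    replace (2 * S m)%nat with (S (S (2 * m))) by lia.
    rewrite kernel_seq_even, (kernel_integral_split 1 (S m)) by lia.
    change (fact (S m)) with (S m * fact m)%nat; rewrite mult_INR; ring.
  - replace (S (S (2 * m + 1))) with (S (2 * S m)) by lia.
    replace (2 * m + 1)%nat with (S (2 * m)) at 1 by lia.
    replace (S (2 * m + 1)) with (S (S (2 * m))) by lia.
    rewrite b_double_succ, kernel_seq_odd, kernel_seq_even,
      (Nat.add_1_r (2 * m)), kernel_seq_odd.
    pose proof (kernel_integral_by_parts (S m)) as Hparts.
    pose proof (kernel_integral_split 0 m ltac:(lia)) as Hsplit.
    simpl pred in Hparts; change (fact (S m)) with (S m * fact m)%nat.
    rewrite mult_INR, S_INR in *; simpl pow in Hparts.
    rewrite Rmult_0_l, Rmult_0_r in Hparts; nra.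
Qed.

Lemma integrand_eq_kernel x : 0 < x -> integrand x = kernel 1 0 x.
Proof.
  intro Hx; unfold integrand, kernel; destruct (Rle_dec x 0); [lra|].
  simpl; field; lra.
Qed.

Lemma ex_RInt_integrand : ex_RInt integrand 0 1.
Proof.
  apply (ex_RInt_ext (kernel 1 0)); [|apply ex_RInt_kernel; lia].
  intros x Hx; rewrite Rmin_left, Rmax_right in Hx by lra.
  symmetry; apply integrand_eq_kernel; lra.
Qed.

Lemma RInt_integrand : RInt integrand 0 1 = kernel_integral 1 0.
Proof.
  apply RInt_ext; intros x Hx; rewrite Rmin_left, Rmax_right in Hx by lra.
  apply integrand_eq_kernel; lra.
Qed.

Lemma inv_tail_kernel_seq_1 : 1 / tail kernel_seq 1 = exp 1 * kernel_integral 1 0.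
Proof.
  unfold tail; rewrite Rplus_comm, kernel_seq_2_add_1.
  change (kernel_seq 1) with (kernel_seq (S (2 * 0))).
  rewrite kernel_seq_odd; simpl (INR (fact 0)).
  pose proof (exp_pos 1); pose proof (kernel_integral_pos 1 0 ltac:(lia)).
  field; lra.
Qed.

Theorem mainTheorem4 :
  exists pr : Riemann_integrable integrand 0 1,
    let A := exp 1 * RiemannInt pr in
    Un_cv Rapprox A /\
    (forall N : nat, Nat.Even N -> Rapprox N > A) /\
    (forall N : nat, Nat.Odd N -> Rapprox N < A).
Proof.
  exists (ex_RInt_Reals_0 _ _ _ ex_RInt_integrand); intro A.
  assert (HA : A = 1 / tail kernel_seq 1)
    by (unfold A; rewrite <- RInt_Reals, RInt_integrand, inv_tail_kernel_seq_1; reflexivity).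
  pose proof kernel_seq_pos as Hpos; pose proof kernel_seq_rec as Hrec.
  rewrite HA; split; [|split].
  - apply Un_cv_of_dist_le_inv with 4; intro N.
    eapply Rle_trans; [apply (Rabs_Rapprox_sub_inv_tail _ Hpos Hrec)|apply Rabs_Rapprox_sub_S].
  - exact (Rapprox_even_gt _ Hpos Hrec).
  - exact (Rapprox_odd_lt _ Hpos Hrec).
Qed.
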